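(* Let $U=U_1\times\cdots\times U_m\subset\mathbb{R}^m_+$ with each $U_i\subseteq\mathbb{R}$, let $C\subseteq\mathbb{R}^m$ and $\overline{U}=U\cap C$, and assume $U$ and $\overline{U}$ are convex compact sets. Let $c\in\mathbb{R}^{n_1}$, $d\in\mathbb{R}^{n_2}$, $a_i\in\mathbb{R}^{n_1}$, $g_i\in\mathbb{R}^{n_2}$ ($i\in[m]$). Let $$z_{\rm cp}=\inf_{x,y}\{c^Tx+d^Ty:\ a_i^Tx+g_i^Ty\ge u_i\ \forall u\in\overline{U},\ \forall i\in[m]\},$$ and for a set $S$ let $$z(S)=\inf_{x\in\mathbb{R}^{n_1},\ y:S\to\mathbb{R}^{n_2}}\Big\{c^Tx+\sup_{u\in S}d^Ty(u):\ a_i^Tx+g_i^Ty(u)\ge u_i\ \forall u\in S,\ \forall i\in[m]\Big\},\qquad z_{\rm acp}=z(\overline{U}).$$ Assume the following compactness condition holds for the adaptive problem under $\Pi(\overline{U}^\downarrow)$: for every $x$ that is the first-stage part of some feasible solution of the problem defining $z(\Pi(\overline{U}^\downarrow))$, there is a compact set $Y_x\subseteq\mathbb{R}^{n_2}$ such that for every $u\in\Pi(\overline{U}^\downarrow)$ and $y\in\mathbb{R}^{n_2}$, if $a_i^Tx+g_i^Ty\ge u_i$ for all $i\in[m]$ then $y\in Y_x$. Suppose $0<z_{\rm acp}\le z_{\rm cp}<\infty$. Then, with $\rho_{\rm adapt}=\rho\big(\Pi(\overline{U}^\downarrow),\overline{U}^\downarrow\big)$, $$\frac{z_{\rm acp}}{z_{\rm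 cp}}\ge\rho_{\rm adapt}.$$
   Context: $[m]=\{1,\dots,m\}$. For $S\subseteq\mathbb{R}^m_+$, $S^\downarrow=\{t\in\mathbb{R}^m_+:\exists s\in S,\ t\le s\text{ componentwise}\}$. For $S\subseteq\mathbb{R}^m$, $\Pi_i(S)$ is the projection of $S$ onto the $i$-th coordinate and $\Pi(S)=\Pi_1(S)\times\cdots\times\Pi_m(S)$. For $r\ge0$, $rS=\{rx:x\in S\}$; $\rho(S_1,S_2)=\max\{\rho\ge0:\rho S_1\subseteq S_2\}$. *)

From HB Require Import structures.
From mathcomp Require Import all_boot all_order all_algebra.
From mathcomp Require Import all_classical all_reals all_analysis.
Set Implicit Arguments. Unset Strict Implicit. Unset Printing Implicit Defensive.
Import Order.TTheory GRing.Theory Num.Theory.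
Import numFieldNormedType.Exports.
Local Open Scope classical_set_scope.
Local Open Scope ring_scope.

Section Defs.
Variable R : realType.

(* vectors of R^n are row vectors 'rV[R]_n; coordinate i of v is v ord0 i *)
Definition dotv n (a x : 'rV[R]_n) : R := \sum_(j < n) a ord0 j * x ord0 j.

Definition nonneg_orthant m : set 'rV[R]_m :=
  [set t | forall i, 0 <= t ord0 i].

Definition downclosure m (S : set 'rV[R]_m) : set 'rV[R]_m :=
  [set t | (forall i, 0 <= t ord0 i) /\
           exists2 s, S s & forall i, t ord0 i <= s ord0 i].

Definition proj_i m (S : set 'rV[R]_m) (i : 'I_m) : set R :=
  [set s ord0 i | s in S].

Definition proj_box m (S : set 'rV[R]_m) : set 'rV[R]_m :=
  [set t | forall i, proj_i S i (t ord0 i)].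

Definition scale_set m (r : R) (S : set 'rV[R]_m) : set 'rV[R]_m :=
  [set r *: x | x in S].

(* rho(S1,S2) = max{ rho >= 0 : rho S1 subset S2 }, taken as a supremum in
   the extended reals (it equals the max whenever the max exists). *)
Definition rho_fit m (S1 S2 : set 'rV[R]_m) : \bar R :=
  ereal_sup [set r%:E | r in [set r : R | 0 <= r /\ scale_set r S1 `<=` S2]].

Definition static_feasible m n1 n2 (a : 'I_m -> 'rV[R]_n1) (g : 'I_m -> 'rV[R]_n2)
  (S : set 'rV[R]_m) (x : 'rV[R]_n1) (y : 'rV[R]_n2) : Prop :=
  forall u, S u -> forall i, u ord0 i <= dotv (a i) x + dotv (g i) y.

Definition z_cp m n1 n2 (c : 'rV[R]_n1) (d : 'rV[R]_n2)
  (a : 'I_m -> 'rV[R]_n1) (g : 'I_m -> 'rV[R]_n2) (S : set 'rV[R]_m) : \bar R :=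
  ereal_inf [set (dotv c xy.1 + dotv d xy.2)%:E |
             xy in [set xy | static_feasible a g S xy.1 xy.2]].

Definition adapt_feasible m n1 n2 (a : 'I_m -> 'rV[R]_n1) (g : 'I_m -> 'rV[R]_n2)
  (S : set 'rV[R]_m) (x : 'rV[R]_n1) (y : 'rV[R]_m -> 'rV[R]_n2) : Prop :=
  forall u, S u -> forall i, u ord0 i <= dotv (a i) x + dotv (g i) (y u).

Definition z_adapt m n1 n2 (c : 'rV[R]_n1) (d : 'rV[R]_n2)
  (a : 'I_m -> 'rV[R]_n1) (g : 'I_m -> 'rV[R]_n2) (S : set 'rV[R]_m) : \bar R :=
  ereal_inf [set ((dotv c xy.1)%:E + ereal_sup [set (dotv d (xy.2 u))%:E | u in S])%E |
             xy in [set xy | adapt_feasible a g S xy.1 xy.2]].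

Definition compactness_condition m n1 n2 (a : 'I_m -> 'rV[R]_n1)
  (g : 'I_m -> 'rV[R]_n2) (S : set 'rV[R]_m) : Prop :=
  forall x : 'rV[R]_n1, (exists y, adapt_feasible a g S x y) ->
    exists Y : set 'rV[R]_n2, compact Y /\
      forall u y, S u ->
        (forall i, u ord0 i <= dotv (a i) x + dotv (g i) y) -> Y y.

End Defs.

From HB Require Import structures.
From mathcomp Require Import all_boot all_order all_algebra.
From mathcomp Require Import all_classical all_reals all_analysis.
Set Implicit Arguments. Unset Strict Implicit. Unset Printing Implicit Defensive.
Import Order.TTheory GRing.Theory Num.Theory.
Import numFieldNormedType.Exports.
Local Open Scope classical_set_scope.
Local Open Scope ring_scope.

(* Let v be the componentwise maximum of the compact set Ubar; v lies in
   Pi(Ubar^down), so any admissible r satisfies r v <= s for some s in Ubar.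
   If (x, y(.)) is adaptively feasible, the static pair (x / r, y(s) / r)
   covers every t in Ubar, because r t <= r v <= s.  Its cost is at most
   (c^T x + sup_u d^T y(u)) / r, whence r z_cp <= z_acp. *)

Section Coordinates.
Variables (R : realType) (m : nat).
Implicit Types (S : set 'rV[R]_m).

Lemma proj_boxS S1 S2 : S1 `<=` S2 -> proj_box S1 `<=` proj_box S2.
Proof. by move=> S12 v vS i; have [s /S12 S2s <-] := vS i; exists s. Qed.

Lemma sub_downclosure S : S `<=` @nonneg_orthant R m -> S `<=` downclosure S.
Proof. by move=> S0 t St; split; [exact: S0 | exists t]. Qed.

Lemma compact_coord_ub S : compact S -> S !=set0 ->
  exists2 v, proj_box S v & forall t, S t -> forall i, t ord0 i <= v ord0 i.
Proof.
move=> cS S0.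
have /choice [s s_spec] : forall i, exists s, S s /\
    forall t, S t -> t ord0 i <= s ord0 i.
  move=> i; have coord_cont : {within S, continuous (fun t : 'rV[R]_m => t ord0 i)}.
    exact/continuous_subspaceT/coord_continuous.
  have [s /set_mem Ss s_max] := compact_EVT_max S0 cS coord_cont.
  by exists s; split => // t St; apply: s_max; apply/mem_set.
exists (\row_i s i ord0 i) => [i|t St i]; rewrite ?mxE.
  by exists (s i); first case: (s_spec i).
by case: (s_spec i) => _; apply.
Qed.

End Coordinates.

Lemma dotvZ (R : realType) n (a x : 'rV[R]_n) (k : R) :
  dotv a (k *: x) = k * dotv a x.
Proof. by rewrite /dotv mulr_sumr; apply: eq_bigr => j _; rewrite mxE mulrCA. Qed.

Section Programs.
Variables (R : realType) (m n1 n2 : nat).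
Variables (c : 'rV[R]_n1) (d : 'rV[R]_n2).
Variables (a : 'I_m -> 'rV[R]_n1) (g : 'I_m -> 'rV[R]_n2).
Implicit Types (S : set 'rV[R]_m).

Lemma z_adapt_set0 : z_adapt c d a g set0 = -oo%E.
Proof.
apply/eqP; rewrite -leeNy_eq; apply: ereal_inf_lbound.
exists (0, fun=> 0) => //=.
by rewrite image_set0 ereal_sup0 addeNy.
Qed.

Lemma z_adapt_gt0_nonempty S : (0 < z_adapt c d a g S)%E -> S !=set0.
Proof.
by apply: contraPP => /set0P/negP/negbNE/eqP ->; rewrite z_adapt_set0.
Qed.

Lemma static_feasible_scale S (s : 'rV[R]_m) r x y : 0 < r ->
  static_feasible a g [set s] x y ->
  (forall t, S t -> forall i, r * t ord0 i <= s ord0 i) ->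
  static_feasible a g S (r^-1 *: x) (r^-1 *: y).
Proof.
move=> r0 s_cov s_dom t St i; rewrite !dotvZ -mulrDr mulrC ler_pdivlMr //.
by rewrite mulrC (le_trans (s_dom t St i)) //; apply: s_cov.
Qed.

Lemma z_cp_scale_le_z_adapt S (v : 'rV[R]_m) r : 0 < r ->
  (forall t, S t -> forall i, t ord0 i <= v ord0 i) ->
  downclosure S (r *: v) ->
  (r%:E * z_cp c d a g S <= z_adapt c d a g S)%E.
Proof.
move=> r0 v_ub [_ [s Ss rv_le_s]].
apply: le_ereal_inf_tmp => _ [[x y] /= feas <-].
have s_dom t : S t -> forall i, r * t ord0 i <= s ord0 i.
  move=> St i; apply: le_trans (rv_le_s i); rewrite mxE ler_pM2l //.
  exact: v_ub.
have static : static_feasible a g S (r^-1 *: x) (r^-1 *: y s).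
  by apply: static_feasible_scale s_dom => // _ ->; apply: feas.
have z_cp_le : (z_cp c d a g S <= (r^-1 * (dotv c x + dotv d (y s)))%:E)%E.
  apply: ereal_inf_lbound; exists (r^-1 *: x, r^-1 *: y s) => //=.
  by rewrite !dotvZ mulrDr.
apply: (le_trans (lee_wpmul2l _ z_cp_le)); first by rewrite lee_fin ltW.
rewrite -EFinM mulrA mulfV ?gt_eqF // mul1r EFinD leeD2l //.
by apply: ereal_sup_ubound; exists s.
Qed.

End Programs.

Theorem theorem3 (R : realType) (m n1 n2 : nat)
  (Ui : 'I_m -> set R) (C : set 'rV[R]_m)
  (c : 'rV[R]_n1) (d : 'rV[R]_n2)
  (a : 'I_m -> 'rV[R]_n1) (g : 'I_m -> 'rV[R]_n2) :
  let U : set 'rV[R]_m := [set u | forall i, Ui i (u ord0 i)] in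
  let Ubar := U `&` C in
  U `<=` @nonneg_orthant R m ->
  convex_set (U : set (convex_lmodType 'rV[R]_m)) -> compact U ->
  convex_set (Ubar : set (convex_lmodType 'rV[R]_m)) -> compact Ubar ->
  compactness_condition a g (proj_box (downclosure Ubar)) ->
  (0 < z_adapt c d a g Ubar)%E ->
  (z_adapt c d a g Ubar <= z_cp c d a g Ubar)%E ->
  (z_cp c d a g Ubar < +oo)%E ->
  (rho_fit (proj_box (downclosure Ubar)) (downclosure Ubar)
     <= (fine (z_adapt c d a g Ubar) / fine (z_cp c d a g Ubar))%:E)%E.
Proof.
move=> U Ubar U0 _ _ _ cUbar _ A_gt0 A_le_B B_lt_oo.
set A := z_adapt c d a g Ubar in A_gt0 A_le_B *.
set B := z_cp c d a g Ubar in A_le_B B_lt_oo *.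
have B_gt0 : (0 < B)%E by apply: lt_le_trans A_le_B.
have A_fin : A \is a fin_num by rewrite ge0_fin_numE ?ltW // (le_lt_trans A_le_B).
have B_fin : B \is a fin_num by rewrite ge0_fin_numE ?ltW.
have fB_gt0 : 0 < fine B by rewrite -lte_fin fineK.
have [v v_box v_ub] := compact_coord_ub cUbar (z_adapt_gt0_nonempty A_gt0).
have Ubar_down : Ubar `<=` downclosure Ubar by apply: sub_downclosure => t [/U0].
apply: ge_ereal_sup => _ [r [r_ge0 r_fit] <-].
rewrite lee_fin ler_pdivlMr //.
have [->|r_neq0] := eqVneq r 0; first by rewrite mul0r fine_ge0 ?ltW.
have r_gt0 : 0 < r by rewrite lt_neqAle eq_sym r_neq0.
have rv_down : downclosure Ubar (r *: v).
  by apply: r_fit; exists v => //; exact: proj_boxS v_box.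
have := z_cp_scale_le_z_adapt c d a g r_gt0 v_ub rv_down.
by rewrite -/A -/B -lee_fin EFinM (fineK A_fin) (fineK B_fin).
Qed.
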